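(* Let $n,a,b$ be positive integers with $a<b$. Then $$\int_{a\pi/n}^{b\pi/n}\frac{\sin^2(nt)}{t}\,dt\ \ge\ \frac1{12}\sum_{i=a}^b\frac1i.$$ *)

From Stdlib Require Import Reals Lra Lia.
From Coquelicot Require Import Coquelicot.

From Stdlib Require Import Reals Lra Lia.
From Coquelicot Require Import Coquelicot.
Open Scope R_scope.

(* Over a half period [c, c + pi/w] of sin^2(w t), the mean of sin^2 is 1/2, so on
   [k pi/w, (k+1) pi/w] the integrand sin^2(w t)/t is at least sin^2(w t) w/((k+1) pi),
   whose integral is 1/(2(k+1)).  Summing over k = a .. b-1 gives half of the harmonic
   sum from a+1 to b, which dominates a third of the harmonic sum from a to b because
   1/a <= 2/(a+1). *)

Lemma sum_n_m_inv_INR_ge_0 (m p : nat) : 0 <= sum_n_m (fun i => / INR i) m p.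
Proof.
  apply Rle_trans with (sum_n_m (fun _ => 0) m p).
  { rewrite sum_n_m_const, Rmult_0_r; apply Rle_refl. }
  apply sum_n_m_le; intros [|k].
  - simpl; rewrite Rinv_0; apply Rle_refl.
  - left; apply Rinv_0_lt_compat, lt_0_INR; lia.
Qed.

Lemma sum_n_m_inv_INR_le_3_tail (a b : nat) : (0 < a)%nat -> (a < b)%nat ->
  sum_n_m (fun i => / INR i) a b <= 3 * sum_n_m (fun i => / INR i) (S a) b.
Proof.
  intros ha hab.
  assert (Ha : 1 <= INR a) by (apply (le_INR 1); lia).
  assert (Hhead : / INR a <= 2 * / INR (S a)).
  { rewrite S_INR; apply (Rmult_le_reg_l (INR a * (INR a + 1))); [nra|].
    field_simplify; lra. }
  assert (Htail : / INR (S a) <= sum_n_m (fun i => / INR i) (S a) b).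
  { rewrite (sum_Sn_m _ (S a)) by lia.
    pose proof (sum_n_m_inv_INR_ge_0 (S (S a)) b); unfold plus; simpl; lra. }
  rewrite (sum_Sn_m _ a) by lia; unfold plus; simpl; lra.
Qed.

Section SineSquareOverT.

Variable w : R.
Hypothesis hw : 0 < w.

Lemma is_RInt_sin_sqr (c d : R) :
  is_RInt (fun t => sin (w * t) ^ 2) c d
    ((d / 2 - sin (2 * w * d) / (4 * w)) - (c / 2 - sin (2 * w * c) / (4 * w))).
Proof.
  apply (is_RInt_derive (V := R_CompleteNormedModule)
           (fun t => t / 2 - sin (2 * w * t) / (4 * w))).
  - intros t _; auto_derive; [exact I|].
    replace (2 * w * t) with (2 * (w * t)) by ring.
    rewrite cos_2a_sin; field; lra.
  - intros t _; apply (ex_derive_continuous (K := R_AbsRing) (V := R_NormedModule)).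
    auto_derive; exact I.
Qed.

(* Stated at type [R]: [RInt] returns an element of a Coquelicot space, on which
   [field] and [lra] do not recognise the equation. *)
Lemma RInt_sin_sqr_half_period (c : R) :
  RInt (fun t => sin (w * t) ^ 2) c (c + PI / w) = PI / (2 * w) :> R.
Proof.
  rewrite (is_RInt_unique _ _ _ _ (is_RInt_sin_sqr c (c + PI / w))).
  replace (2 * w * (c + PI / w)) with (2 * w * c + 2 * INR 1 * PI)
    by (simpl; field; lra).
  rewrite sin_period; field; lra.
Qed.

Lemma ex_RInt_sin_sqr_div (c d : R) : 0 < c <= d ->
  ex_RInt (fun t => sin (w * t) ^ 2 / t) c d.
Proof.
  intros Hcd; apply (ex_RInt_continuous (V := R_CompleteNormedModule)).
  intros t Ht; rewrite Rmin_left, Rmax_right in Ht by lra.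
  apply (ex_derive_continuous (K := R_AbsRing) (V := R_NormedModule)).
  auto_derive; lra.
Qed.

Lemma RInt_sin_sqr_div_half_period_ge (c : R) : 0 < c ->
  RInt (fun t => sin (w * t) ^ 2 / t) c (c + PI / w) >= PI / (2 * w) / (c + PI / w).
Proof.
  intros Hc; set (d := c + PI / w).
  assert (Hpw : 0 < PI / w) by (apply Rdiv_lt_0_compat; [apply PI_RGT_0 | exact hw]).
  assert (Hcd : c < d) by (unfold d; lra).
  assert (Hlow : is_RInt (fun t => / d * sin (w * t) ^ 2) c d (/ d * (PI / (2 * w)))).
  { rewrite <- (RInt_sin_sqr_half_period c).
    apply (is_RInt_scal (V := R_CompleteNormedModule)), RInt_correct.
    eexists; apply is_RInt_sin_sqr. }
  replace (PI / (2 * w) / d) with (/ d * (PI / (2 * w))) by (field; lra).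
  apply Rle_ge; rewrite <- (is_RInt_unique _ _ _ _ Hlow).
  apply RInt_le; [lra | eexists; exact Hlow | apply ex_RInt_sin_sqr_div; lra |].
  intros t Ht; rewrite Rmult_comm; unfold Rdiv.
  apply Rmult_le_compat_l; [apply pow2_ge_0 | apply Rinv_le_contravar; lra].
Qed.

Lemma RInt_sin_sqr_div_between_nodes (k : nat) : (0 < k)%nat ->
  RInt (fun t => sin (w * t) ^ 2 / t) (INR k * PI / w) (INR (S k) * PI / w)
    >= / 2 * / INR (S k).
Proof.
  intros hk; pose proof PI_RGT_0.
  assert (Hk : 0 < INR k) by (apply lt_0_INR; lia).
  replace (INR (S k) * PI / w) with (INR k * PI / w + PI / w) by (rewrite S_INR; field; lra).
  replace (/ 2 * / INR (S k)) with (PI / (2 * w) / (INR k * PI / w + PI / w))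
    by (rewrite S_INR; field; repeat split; nra).
  apply RInt_sin_sqr_div_half_period_ge, Rdiv_lt_0_compat; nra.
Qed.

Lemma RInt_sin_sqr_div_ge_harmonic (a m : nat) : (0 < a)%nat ->
  RInt (fun t => sin (w * t) ^ 2 / t) (INR a * PI / w) (INR (a + m) * PI / w)
    >= / 2 * sum_n_m (fun i => / INR i) (S a) (a + m).
Proof.
  intros ha; pose proof PI_RGT_0.
  assert (node_pos : forall k, (0 < k)%nat -> 0 < INR k * PI / w).
  { intros k hk; apply Rdiv_lt_0_compat; [apply Rmult_lt_0_compat|]; auto.
    apply lt_0_INR; lia. }
  assert (node_le : forall k l, (k <= l)%nat -> INR k * PI / w <= INR l * PI / w).
  { intros k l hkl; unfold Rdiv; apply Rmult_le_compat_r; [left; apply Rinv_0_lt_compat; lra|].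
    apply Rmult_le_compat_r; [lra | apply le_INR; lia]. }
  induction m as [|m IH].
  - rewrite Nat.add_0_r, RInt_point, sum_n_m_zero by lia; unfold zero; simpl; lra.
  - rewrite Nat.add_succ_r, sum_n_Sm by lia.
    rewrite <- (RInt_Chasles _ _ (INR (a + m) * PI / w)).
    2, 3: apply ex_RInt_sin_sqr_div; split; [apply node_pos; lia | apply node_le; lia].
    pose proof (RInt_sin_sqr_div_between_nodes (a + m) ltac:(lia)).
    unfold plus; cbn -[INR RInt pow sum_n_m]; lra.
Qed.

End SineSquareOverT.

Theorem lemma5p7 (n a b : nat) (hn : (0 < n)%nat) (ha : (0 < a)%nat) (hab : (a < b)%nat) :
  RInt (fun t => (sin (INR n * t)) ^ 2 / t) (INR a * PI / INR n) (INR b * PI / INR n)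
  >= / 12 * sum_n_m (fun i => / INR i) a b.
Proof.
  assert (Hn : 0 < INR n) by (apply lt_0_INR; lia).
  pose proof (RInt_sin_sqr_div_ge_harmonic (INR n) Hn a (b - a) ha) as Hint.
  replace (a + (b - a))%nat with b in Hint by lia.
  pose proof (sum_n_m_inv_INR_le_3_tail a b ha hab).
  pose proof (sum_n_m_inv_INR_ge_0 a b).
  lra.
Qed.
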